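(* If expressions $e$ and $e'$ are compatible and $[\![C]\!]$ is a total function, then $[\![C^{\langle e,e'\rangle}]\!]$ is a total function.
   Context: $\mathcal A=\langle U,+,\cdot,\mathbf 0,\mathbf 1\rangle$ is a partial semiring ($+$ commutative, associative, possibly partial, unit $\mathbf 0$; $\cdot$ total, associative, unit $\mathbf 1$; two-sided distributivity; $\mathbf 0$ annihilates), naturally ordered ($u\le v$ iff $\exists w.\,u+w=v$ is a partial order), Scott continuous ($+$ and $\cdot$ preserve suprema of directed sets in each argument), with a top element. Infinite sums are suprema of finite partial sums. $\mathcal W(\Sigma)$: maps $m:\Sigma\to U$ with countable support and defined mass, with pointwise operations and order $m_1\sqsubseteq m_2$ iff $m_1+m=m_2$ for some $m$. $\eta(\sigma)(\tau)=\mathbf 1$ if $\sigma=\tau$ else $\mathbf 0$; $f^\dagger(m)(\tau)=\sum_{\sigma\in\mathrm{supp}(m)}m(\sigma)\cdot f(\sigma)(\tau)$. The semantics of iteration is $[\![C^{\langle e,e'\rangle}]\!]=\mathrm{lfp}(\Phi)$, the least fixed point (w.r.t. the pointwise order on functions $\Sigma\to\mathcal W(\Sigma)$) of $\Phi(f)(\sigma)=[\![e]\!](\sigma)\cdot f^\dagger([\![C]\!](\sigma))+[\![e']\!](\sigma)\cdot\eta(\sigma)$. An expression $e$ is a test $b$ (Boolean combination of $\mathsf{true},\mathsf{false}$ and primitive tests $t\subseteq\Sigma$, with $[\![b]\!](\sigma)\in\{\mathbf 0,\mathbf 1\}$, $[\![t]\!](\sigma)=\mathbf 1$ iff $\sigma\in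 t$) or a weight $u\in U$ with $[\![u]\!](\sigma)=u$. Expressions $e,e'$ are compatible if $[\![e]\!](\sigma)+[\![e']\!](\sigma)$ is defined for every $\sigma\in\Sigma$. *)

From Stdlib Require Import List Classical ClassicalDescription.
Import ListNotations.

Set Implicit Arguments.

Definition nle {U : Type} (padd : U -> U -> option U) (u v : U) : Prop :=
  exists w, padd u w = Some v.

Definition is_ub {U : Type} (le : U -> U -> Prop) (D : U -> Prop) (b : U) : Prop :=
  forall d, D d -> le d b.

Definition is_sup {U : Type} (le : U -> U -> Prop) (D : U -> Prop) (s : U) : Prop :=
  is_ub le D s /\ forall b, is_ub le D b -> le s b.

Definition directed {U : Type} (le : U -> U -> Prop) (D : U -> Prop) : Prop :=
  (exists d, D d) /\
  forall x y, D x -> D y -> exists z, D z /\ le x z /\ le y z.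

Definition obind {A B : Type} (f : A -> option B) (o : option A) : option B :=
  match o with Some a => f a | None => None end.

Record PSemiring := {
  car :> Type;
  padd : car -> car -> option car;
  pmul : car -> car -> car;
  pzero : car;
  pone : car;
  (* + commutative, associative (Kleene equality), unit 0 *)
  padd_comm : forall u v, padd u v = padd v u;
  padd_assoc : forall u v w,
      obind (fun x => padd x w) (padd u v) = obind (fun y => padd u y) (padd v w);
  padd_0 : forall u, padd u pzero = Some u;
  pmul_assoc : forall u v w, pmul u (pmul v w) = pmul (pmul u v) w;
  pmul_1l : forall u, pmul pone u = u;
  pmul_1r : forall u, pmul u pone = u;
  pdistr_l : forall u v w s, padd v w = Some s ->
      padd (pmul u v) (pmul u w) = Some (pmul u s);
  pdistr_r : forall u v w s, padd v w = Some s ->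
      padd (pmul v u) (pmul w u) = Some (pmul s u);
  pmul_0l : forall u, pmul pzero u = pzero;
  pmul_0r : forall u, pmul u pzero = pzero;
  (* naturally ordered: the natural order is a partial order
     (reflexivity and transitivity are automatic) *)
  nle_antisym : forall u v, nle padd u v -> nle padd v u -> u = v;
  has_top : exists t, forall u, nle padd u t;
  dir_sup : forall D, directed (nle padd) D -> exists s, is_sup (nle padd) D s;
  pmul_cont_l : forall D s u, directed (nle padd) D -> is_sup (nle padd) D s ->
      is_sup (nle padd) (fun x => exists d, D d /\ x = pmul u d) (pmul u s);
  pmul_cont_r : forall D s u, directed (nle padd) D -> is_sup (nle padd) D s ->
      is_sup (nle padd) (fun x => exists d, D d /\ x = pmul d u) (pmul s u);
  padd_cont : forall D s u, directed (nle padd) D -> is_sup (nle padd) D s ->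
      (forall d, D d -> exists w, padd u d = Some w) ->
      exists v, padd u s = Some v /\
        is_sup (nle padd) (fun x => exists d, D d /\ padd u d = Some x) v
}.

Arguments padd {_}.
Arguments pmul {_}.
Arguments pzero {_}.
Arguments pone {_}.

Section Sem.
Variable A : PSemiring.

Definition le (u v : A) : Prop := nle padd u v.

Definition fsum (l : list A) : option A :=
  fold_right (fun x acc => obind (padd x) acc) (Some pzero) l.

Definition sum_on {I : Type} (S : I -> Prop) (g : I -> A) (v : A) : Prop :=
  (forall l : list I, NoDup l -> (forall i, In i l -> S i) ->
       exists w, fsum (map g l) = Some w) /\
  is_sup le (fun x => exists l : list I, NoDup l /\ (forall i, In i l -> S i) /\
                          fsum (map g l) = Some x) v.

Variable Sigma : Type.

Definition supp (m : Sigma -> A) (s : Sigma) : Prop := m s <> pzero.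

Definition countable_supp (m : Sigma -> A) : Prop :=
  exists enum : nat -> option Sigma, forall s, supp m s -> exists n, enum n = Some s.

Definition isW (m : Sigma -> A) : Prop :=
  countable_supp m /\ exists v, sum_on (fun _ => True) m v.

Definition Wle (m1 m2 : Sigma -> A) : Prop :=
  exists m, isW m /\ forall t, padd (m1 t) (m t) = Some (m2 t).

Definition Fle (f g : Sigma -> Sigma -> A) : Prop :=
  forall s, Wle (f s) (g s).

Definition eta (s : Sigma) : Sigma -> A :=
  fun t => if excluded_middle_informative (s = t) then pone else pzero.

(* [bind_is f m k]: f^dagger(m) is defined and equals k *)
Definition bind_is (f : Sigma -> Sigma -> A) (m : Sigma -> A) (k : Sigma -> A) : Prop :=
  forall t, sum_on (supp m) (fun s => pmul (m s) (f s t)) (k t).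

Inductive test : Type :=
  | BTrue | BFalse
  | BPrim (t : Sigma -> bool)
  | BNot (b : test)
  | BAnd (b1 b2 : test)
  | BOr (b1 b2 : test).

Fixpoint tsem (b : test) (s : Sigma) : bool :=
  match b with
  | BTrue => true
  | BFalse => false
  | BPrim t => t s
  | BNot b => negb (tsem b s)
  | BAnd b1 b2 => andb (tsem b1 s) (tsem b2 s)
  | BOr b1 b2 => orb (tsem b1 s) (tsem b2 s)
  end.

Inductive expr : Type :=
  | ETest (b : test)
  | EWeight (u : A).

Definition esem (e : expr) (s : Sigma) : A :=
  match e with
  | ETest b => if tsem b s then pone else pzero
  | EWeight u => u
  end.

Definition compatible (e e' : expr) : Prop :=
  forall s, exists w, padd (esem e s) (esem e' s) = Some w.

(* [Phi_is c e e' f s r]: Phi(f)(s) is defined and equals r, where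
   Phi(f)(s) = [[e]](s) . f^dagger([[C]](s)) + [[e']](s) . eta(s)
   and c = [[C]]. *)
Definition Phi_is (c : Sigma -> Sigma -> A) (e e' : expr)
    (f : Sigma -> Sigma -> A) (s : Sigma) (r : Sigma -> A) : Prop :=
  exists k, bind_is f (c s) k /\
    forall t, padd (pmul (esem e s) (k t)) (pmul (esem e' s) (eta s t)) = Some (r t).

Definition is_lfp_iter (c : Sigma -> Sigma -> A) (e e' : expr)
    (f : Sigma -> Sigma -> A) : Prop :=
  (forall s, isW (f s)) /\
  (forall s, Phi_is c e e' f s (f s)) /\
  (forall g, (forall s, isW (g s)) -> (forall s, Phi_is c e e' g s (g s)) -> Fle f g).

End Sem.

Arguments isW {A Sigma}.
Arguments compatible {A Sigma}.
Arguments is_lfp_iter {A Sigma}.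
Arguments Phi_is {A Sigma}.
Arguments Fle {A Sigma}.
Arguments Wle {A Sigma}.

(* Kleene iteration.  As A has a top element and definedness of + is inherited
   downwards along the natural order, Phi(f)(s) is defined for every f:
   e(s) k + e'(s) y lies below (e(s) + e'(s)) top, which exists by compatibility,
   and the partial sums of f^dagger lie below mass([[C]](s)) top.  Phi is monotone
   and, by Scott continuity of + and ., preserves suprema of chains, so the
   pointwise supremum of the chain Phi^n(0) is a fixed point lying below every
   fixed point.  It stays in W(Sigma): supports remain countable (countable unions
   of countable sets) and masses remain defined (finite double sums can be
   exchanged, and finite sums commute with directed suprema). *)

From Stdlib Require Import List Permutation Classical ClassicalDescription ClassicalEpsilon Cantor Lia.
Import ListNotations.

Section NaturalOrder.
Variable A : PSemiring.
Local Infix "⊑" := (le A) (at level 70).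

Lemma padd_assoc_r (a b c ab r : A) :
  padd a b = Some ab -> padd ab c = Some r ->
  exists bc, padd b c = Some bc /\ padd a bc = Some r.
Proof.
  intros Hab Hr. pose proof (padd_assoc A a b c) as H.
  rewrite Hab in H; simpl in H; rewrite Hr in H.
  destruct (padd b c) as [bc|]; simpl in H; [eauto | discriminate].
Qed.

Lemma padd_assoc_l (a b c bc r : A) :
  padd b c = Some bc -> padd a bc = Some r ->
  exists ab, padd a b = Some ab /\ padd ab c = Some r.
Proof.
  intros Hbc Hr. pose proof (padd_assoc A a b c) as H.
  rewrite Hbc in H; simpl in H; rewrite Hr in H.
  destruct (padd a b) as [ab|]; simpl in H; [eauto | discriminate].
Qed.

Lemma padd_interchange (a b c d ab cd r : A) :
  padd a b = Some ab -> padd c d = Some cd -> padd ab cd = Some r ->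
  exists ac bd, padd a c = Some ac /\ padd b d = Some bd /\ padd ac bd = Some r.
Proof.
  intros Hab Hcd Hr.
  destruct (padd_assoc_r _ _ _ _ _ Hab Hr) as (bcd & Hbcd & Habcd).
  destruct (padd_assoc_l _ _ _ _ _ Hcd Hbcd) as (bc & Hbc & Hbc_d).
  rewrite padd_comm in Hbc.
  destruct (padd_assoc_r _ _ _ _ _ Hbc Hbc_d) as (bd & Hbd & Hc_bd).
  destruct (padd_assoc_l _ _ _ _ _ Hc_bd Habcd) as (ac & Hac & Hac_bd).
  eauto.
Qed.

Lemma le_refl (a : A) : a ⊑ a.
Proof. exists pzero. apply padd_0. Qed.

Lemma le_trans (a b c : A) : a ⊑ b -> b ⊑ c -> a ⊑ c.
Proof.
  intros [w Hw] [w' Hw'].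
  destruct (padd_assoc_r _ _ _ _ _ Hw Hw') as (x & _ & Hx). exists x; exact Hx.
Qed.

Lemma le_0 (a : A) : pzero ⊑ a.
Proof. exists a. rewrite padd_comm. apply padd_0. Qed.

Lemma le_padd_l (a b c : A) : padd a b = Some c -> a ⊑ c.
Proof. intros H; exists b; exact H. Qed.

Lemma le_padd_r (a b c : A) : padd a b = Some c -> b ⊑ c.
Proof. intros H; exists a; rewrite padd_comm; exact H. Qed.

Lemma padd_down_l (a a' b c' : A) : a ⊑ a' -> padd a' b = Some c' ->
  exists c, padd a b = Some c /\ c ⊑ c'.
Proof.
  intros [w Hw] H.
  destruct (padd_assoc_r _ _ _ _ _ Hw H) as (wb & Hwb & Ha_wb).
  rewrite padd_comm in Hwb.
  destruct (padd_assoc_l _ _ _ _ _ Hwb Ha_wb) as (ab & Hab & Hab_w).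
  exists ab; split; [exact Hab | exists w; exact Hab_w].
Qed.

Lemma padd_down (a a' b b' c' : A) : a ⊑ a' -> b ⊑ b' -> padd a' b' = Some c' ->
  exists c, padd a b = Some c /\ c ⊑ c'.
Proof.
  intros Ha Hb H.
  destruct (padd_down_l _ _ _ _ Ha H) as (c1 & Hc1 & Hc1c').
  rewrite padd_comm in Hc1.
  destruct (padd_down_l _ _ _ _ Hb Hc1) as (c & Hc & Hcc1).
  exists c; split; [rewrite padd_comm; exact Hc | eapply le_trans; eauto].
Qed.

Lemma padd_mono (a a' b b' c c' : A) : a ⊑ a' -> b ⊑ b' ->
  padd a b = Some c -> padd a' b' = Some c' -> c ⊑ c'.
Proof.
  intros Ha Hb H H'. destruct (padd_down _ _ _ _ _ Ha Hb H') as (c0 & Hc0 & Hle).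
  rewrite H in Hc0; injection Hc0 as ->; exact Hle.
Qed.

Lemma pmul_mono_l (u a b : A) : a ⊑ b -> pmul u a ⊑ pmul u b.
Proof. intros [w Hw]. exists (pmul u w). apply pdistr_l; exact Hw. Qed.

Definition top : A := epsilon (inhabits pzero) (fun t => forall u, u ⊑ t).

Lemma le_top (u : A) : u ⊑ top.
Proof. exact (epsilon_spec _ (fun t => forall u, u ⊑ t) (has_top A) u). Qed.

End NaturalOrder.

Section FiniteSums.
Variable A : PSemiring.
Local Infix "⊑" := (le A) (at level 70).

Lemma fsum_cons_inv (x : A) l v : fsum A (x :: l) = Some v ->
  exists w, fsum A l = Some w /\ padd x w = Some v.
Proof. simpl. destruct (fsum A l); simpl; [eauto | discriminate]. Qed.

Lemma fsum_zero {I} (g : I -> A) l : (forall i, In i l -> g i = pzero) ->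
  fsum A (map g l) = Some pzero.
Proof.
  induction l as [|i l IH]; simpl; intros H; [reflexivity|].
  rewrite IH by auto. simpl. rewrite H by auto. apply padd_0.
Qed.

Lemma fsum_down {I} (g h : I -> A) l b : (forall i, In i l -> g i ⊑ h i) ->
  fsum A (map h l) = Some b -> exists a, fsum A (map g l) = Some a /\ a ⊑ b.
Proof.
  revert b; induction l as [|i l IH]; simpl; intros b Hle Hb.
  - injection Hb as <-. exists pzero; split; [reflexivity | apply le_refl].
  - destruct (fsum A (map h l)) as [w|]; simpl in Hb; [|discriminate].
    destruct (IH w) as (a & Ha & Haw); auto.
    rewrite Ha; simpl. exact (padd_down A _ _ _ _ _ (Hle i (or_introl eq_refl)) Haw Hb).
Qed.

Lemma fsum_pmul_l {I} (g : I -> A) l u v : fsum A (map g l) = Some v ->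
  fsum A (map (fun i => pmul u (g i)) l) = Some (pmul u v).
Proof.
  revert v; induction l as [|i l IH]; simpl; intros v H.
  - injection H as <-. rewrite pmul_0r; reflexivity.
  - destruct (fsum A (map g l)) as [w|]; simpl in H; [|discriminate].
    rewrite (IH w eq_refl). simpl. apply pdistr_l; exact H.
Qed.

Lemma fsum_pmul_r {I} (g : I -> A) l u v : fsum A (map g l) = Some v ->
  fsum A (map (fun i => pmul (g i) u) l) = Some (pmul v u).
Proof.
  revert v; induction l as [|i l IH]; simpl; intros v H.
  - injection H as <-. rewrite pmul_0l; reflexivity.
  - destruct (fsum A (map g l)) as [w|]; simpl in H; [|discriminate].
    rewrite (IH w eq_refl). simpl. apply pdistr_r; exact H.
Qed.

Lemma fsum_padd {I} (a b h : I -> A) l sa sb s :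
  (forall i, In i l -> padd (a i) (b i) = Some (h i)) ->
  fsum A (map a l) = Some sa -> fsum A (map b l) = Some sb -> padd sa sb = Some s ->
  fsum A (map h l) = Some s.
Proof.
  revert sa sb s; induction l as [|i l IH]; simpl; intros sa sb s Hh Ha Hb Hs.
  - injection Ha as <-; injection Hb as <-. rewrite padd_0 in Hs. exact Hs.
  - destruct (fsum A (map a l)) as [a'|]; simpl in Ha; [|discriminate].
    destruct (fsum A (map b l)) as [b'|]; simpl in Hb; [|discriminate].
    destruct (padd_interchange A _ _ _ _ _ _ _ Ha Hb Hs) as (ab & ab' & Hab & Hab' & H).
    rewrite (IH a' b' ab') by auto. simpl.
    rewrite Hh in Hab by auto. injection Hab as <-. exact H.
Qed.

Lemma fsum_app (l1 l2 : list A) v : fsum A (l1 ++ l2) = Some v ->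
  exists v1 v2, fsum A l1 = Some v1 /\ fsum A l2 = Some v2 /\ padd v1 v2 = Some v.
Proof.
  revert v; induction l1 as [|x l1 IH]; simpl; intros v H.
  - exists pzero, v. rewrite padd_comm, padd_0. auto.
  - destruct (fsum A (l1 ++ l2)) as [w|]; simpl in H; [|discriminate].
    destruct (IH w eq_refl) as (v1 & v2 & H1 & H2 & H12).
    destruct (padd_assoc_l A _ _ _ _ _ H12 H) as (xv1 & Hxv1 & Hv).
    exists xv1, v2. rewrite H1. auto.
Qed.

Lemma fsum_perm (l l' : list A) : Permutation l l' -> fsum A l = fsum A l'.
Proof.
  induction 1 as [| x l l' _ IH | x y l | l l' l'' _ IH _ IH']; simpl.
  - reflexivity.
  - rewrite IH. reflexivity.
  - destruct (fsum A l) as [z|]; simpl; [|reflexivity].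
    pose proof (padd_assoc A y x z) as Hyx. pose proof (padd_assoc A x y z) as Hxy.
    rewrite padd_comm in Hxy. exact (eq_trans (eq_sym Hyx) Hxy).
  - congruence.
Qed.

Lemma fsum_incl {I} (g : I -> A) l l' b : NoDup l -> NoDup l' -> incl l l' ->
  fsum A (map g l') = Some b -> exists a, fsum A (map g l) = Some a /\ a ⊑ b.
Proof.
  intros Hl Hl' Hincl Hb.
  set (rest := filter (fun x => if excluded_middle_informative (In x l) then false else true) l').
  assert (Hperm : Permutation (l ++ rest) l').
  { unfold rest. apply NoDup_Permutation; [| exact Hl' |].
    - apply NoDup_app; [exact Hl | apply NoDup_filter; exact Hl' |].
      intros x Hx Hr. apply filter_In in Hr as [_ Hr].
      destruct (excluded_middle_informative (In x l)); [discriminate | contradiction].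
    - intros x. rewrite in_app_iff, filter_In. split.
      + intros [Hx | [Hx _]]; auto.
      + intros Hx. destruct (excluded_middle_informative (In x l)); auto. }
  rewrite <- (fsum_perm _ _ (Permutation_map g Hperm)), map_app in Hb.
  destruct (fsum_app _ _ _ Hb) as (a & r & Ha & _ & Har).
  exists a; split; [exact Ha | exact (le_padd_l A _ _ _ Har)].
Qed.

(* [fsum0 l] is [fsum A l] when that sum is defined, and the junk value [pzero]
   otherwise. *)
Definition fsum0 (l : list A) : A :=
  match fsum A l with Some v => v | None => pzero end.

Lemma fsum0_eq l v : fsum A l = Some v -> fsum0 l = v.
Proof. unfold fsum0; intros ->; reflexivity. Qed.

Lemma fsum0_mono {I} (g h : I -> A) l : (forall i, In i l -> g i ⊑ h i) ->
  (exists w, fsum A (map h l) = Some w) -> fsum0 (map g l) ⊑ fsum0 (map h l).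
Proof.
  intros Hle [w Hw]. destruct (fsum_down g h l w Hle Hw) as (a & Ha & Haw).
  rewrite (fsum0_eq _ _ Ha), (fsum0_eq _ _ Hw). exact Haw.
Qed.

Lemma fsum_exchange {I T} (x : I -> T -> A) (l : list I) (L : list T) v :
  (forall t, In t L -> exists w, fsum A (map (fun i => x i t) l) = Some w) ->
  (forall i, In i l -> exists w, fsum A (map (x i) L) = Some w) ->
  fsum A (map (fun i => fsum0 (map (x i) L)) l) = Some v ->
  fsum A (map (fun t => fsum0 (map (fun i => x i t) l)) L) = Some v.
Proof.
  revert v; induction l as [|i l IH]; intros v Hcols Hrows Hv.
  - injection Hv as <-. apply fsum_zero. reflexivity.
  - apply fsum_cons_inv in Hv as (w & Hw & Hiw).
    destruct (Hrows i (or_introl eq_refl)) as [ri Hri].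
    rewrite (fsum0_eq _ _ Hri) in Hiw.
    assert (Htail : forall t, In t L -> exists w, fsum A (map (fun i => x i t) l) = Some w).
    { intros t Ht. destruct (Hcols t Ht) as [w' Hw'].
      apply fsum_cons_inv in Hw' as (w'' & Hw'' & _). eauto. }
    apply (fsum_padd (x i) (fun t => fsum0 (map (fun i => x i t) l)) _ L ri w v);
      [| exact Hri | apply IH; auto; intros j Hj; apply Hrows; right; exact Hj | exact Hiw].
    intros t Ht. destruct (Hcols t Ht) as [w' Hw'].
    rewrite (fsum0_eq _ _ Hw'). simpl in Hw'.
    destruct (Htail t Ht) as [w'' Hw'']. rewrite Hw'' in Hw'. simpl in Hw'.
    rewrite (fsum0_eq _ _ Hw''). exact Hw'.
Qed.

End FiniteSums.

Section DirectedSups.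
Variable A : PSemiring.
Local Infix "⊑" := (le A) (at level 70).

Definition image {J} (P : J -> Prop) (a : J -> A) : A -> Prop :=
  fun x => exists j, P j /\ x = a j.

Definition directed_index {J} (P : J -> Prop) (R : J -> J -> Prop) : Prop :=
  (exists j, P j) /\ forall j1 j2, P j1 -> P j2 -> exists j3, P j3 /\ R j1 j3 /\ R j2 j3.

Definition monotone_on {J} (P : J -> Prop) (R : J -> J -> Prop) (a : J -> A) : Prop :=
  forall j j', P j -> P j' -> R j j' -> a j ⊑ a j'.

Lemma is_sup_ext (D D' : A -> Prop) s :
  (forall x, D x <-> D' x) -> is_sup (le A) D s -> is_sup (le A) D' s.
Proof.
  intros H [Hub Hleast]. split.
  - intros d Hd. apply Hub, H, Hd.
  - intros b Hb. apply Hleast. intros d Hd. apply Hb, H, Hd.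
Qed.

Lemma sup_unique (D : A -> Prop) a b : is_sup (le A) D a -> is_sup (le A) D b -> a = b.
Proof. intros [Ha Ha'] [Hb Hb']. apply nle_antisym; [apply Ha' | apply Hb']; assumption. Qed.

Lemma sup_nonzero {J} (P : J -> Prop) (a : J -> A) v :
  is_sup (le A) (image P a) v -> v <> pzero -> exists j, P j /\ a j <> pzero.
Proof.
  intros [_ Hleast] Hv. apply NNPP. intros Hno. apply Hv, nle_antisym; [|apply le_0].
  apply Hleast. intros x [j [Hj ->]].
  destruct (classic (a j = pzero)) as [-> | Hz]; [apply le_refl | exfalso; eauto].
Qed.

Lemma sup_exchange {J1 J2} (P1 : J1 -> Prop) (P2 : J2 -> Prop) (X : J1 -> J2 -> A) a b v :
  (forall j1, P1 j1 -> is_sup (le A) (image P2 (X j1)) (a j1)) ->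
  (forall j2, P2 j2 -> is_sup (le A) (image P1 (fun j1 => X j1 j2)) (b j2)) ->
  is_sup (le A) (image P1 a) v -> is_sup (le A) (image P2 b) v.
Proof.
  intros Ha Hb [Hub Hleast]. split.
  - intros x [j2 [Hj2 ->]]. apply (proj2 (Hb j2 Hj2)).
    intros y [j1 [Hj1 ->]]. apply le_trans with (a j1).
    + apply (proj1 (Ha j1 Hj1)). exists j2; auto.
    + apply Hub. exists j1; auto.
  - intros β Hβ. apply Hleast. intros x [j1 [Hj1 ->]]. apply (proj2 (Ha j1 Hj1)).
    intros y [j2 [Hj2 ->]]. apply le_trans with (b j2).
    + apply (proj1 (Hb j2 Hj2)). exists j1; auto.
    + apply Hβ. exists j2; auto.
Qed.

Lemma sup_shift (a : nat -> A) v : a 0 ⊑ a 1 ->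
  is_sup (le A) (image (fun _ => True) (fun n => a (S n))) v ->
  is_sup (le A) (image (fun _ => True) a) v.
Proof.
  intros H01 [Hub Hleast]. split.
  - intros x [[|n] [_ ->]].
    + apply le_trans with (a 1); [exact H01 | apply Hub; exists 0; auto].
    + apply Hub. exists n; auto.
  - intros β Hβ. apply Hleast. intros x [n [_ ->]]. apply Hβ. exists (S n); auto.
Qed.

Lemma nat_directed : directed_index (fun _ : nat => True) Peano.le.
Proof.
  split; [exists 0; exact I|].
  intros n m _ _. exists (Nat.max n m). repeat split; lia.
Qed.

Section Index.
Context {J : Type} (P : J -> Prop) (R : J -> J -> Prop).
Hypothesis index_directed : directed_index P R.

Lemma image_directed (a : J -> A) : monotone_on P R a -> directed (le A) (image P a).
Proof.
  intros Ha. destruct index_directed as [[j Hj] Hdir]. split.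
  - exists (a j), j. auto.
  - intros x y [j1 [Hj1 ->]] [j2 [Hj2 ->]].
    destruct (Hdir j1 j2 Hj1 Hj2) as (j3 & Hj3 & H13 & H23).
    exists (a j3). split; [exists j3; auto | split; apply Ha; auto].
Qed.

Lemma sup_exists (a : J -> A) : monotone_on P R a -> exists v, is_sup (le A) (image P a) v.
Proof. intros Ha. exact (dir_sup A (image_directed a Ha)). Qed.

Lemma sup_const (u : A) : is_sup (le A) (image P (fun _ => u)) u.
Proof.
  destruct index_directed as [[j Hj] _]. split.
  - intros x [j' [_ ->]]. apply le_refl.
  - intros b Hb. apply Hb. exists j; auto.
Qed.

Lemma pmul_sup_l (a : J -> A) u s : monotone_on P R a ->
  is_sup (le A) (image P a) s -> is_sup (le A) (image P (fun j => pmul u (a j))) (pmul u s).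
Proof.
  intros Ha Hs. generalize (pmul_cont_l A u (image_directed a Ha) Hs).
  apply is_sup_ext. intros x. split.
  - intros [d [[j [Hj ->]] ->]]. exists j; auto.
  - intros [j [Hj ->]]. exists (a j). split; [exists j; auto | reflexivity].
Qed.

(* Scott continuity of [+] in each argument separately gives joint continuity
   along a directed index. *)
Lemma padd_sup (a b r : J -> A) sa sb :
  monotone_on P R a -> monotone_on P R b ->
  is_sup (le A) (image P a) sa -> is_sup (le A) (image P b) sb ->
  (forall j, P j -> padd (a j) (b j) = Some (r j)) ->
  exists v, padd sa sb = Some v /\ is_sup (le A) (image P r) v.
Proof.
  intros Ha Hb Hsa Hsb Hr. destruct index_directed as [_ Hdir].
  assert (Hbelow : forall j k, P j -> P k ->
            exists j3 w, P j3 /\ padd (a j) (b k) = Some w /\ w ⊑ r j3).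
  { intros j k Hj Hk. destruct (Hdir j k Hj Hk) as (j3 & Hj3 & Hjj3 & Hkj3).
    destruct (padd_down A _ _ _ _ _ (Ha j j3 Hj Hj3 Hjj3) (Hb k j3 Hk Hj3 Hkj3) (Hr j3 Hj3))
      as (w & Hw & Hwr).
    exists j3, w. auto. }
  assert (Hrow : forall j, P j -> exists w, padd (a j) sb = Some w /\
            is_sup (le A) (fun x => exists d, image P b d /\ padd (a j) d = Some x) w).
  { intros j Hj. apply (padd_cont A (a j) (image_directed b Hb) Hsb).
    intros d [k [Hk ->]]. destruct (Hbelow j k Hj Hk) as (j3 & w & _ & Hw & _). eauto. }
  destruct (padd_cont A sb (image_directed a Ha) Hsa) as (v & Hv & [Hvub Hvleast]).
  { intros d [j [Hj ->]]. destruct (Hrow j Hj) as (w & Hw & _).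
    rewrite padd_comm in Hw. eauto. }
  exists v. split; [rewrite padd_comm; exact Hv | split].
  - intros x [j [Hj ->]]. destruct (Hrow j Hj) as (w & Hw & _).
    assert (Hbj : b j ⊑ sb) by (apply (proj1 Hsb); exists j; auto).
    apply le_trans with w.
    + exact (padd_mono A _ _ _ _ _ _ (le_refl A (a j)) Hbj (Hr j Hj) Hw).
    + apply Hvub. exists (a j). split; [exists j; auto | rewrite padd_comm; exact Hw].
  - intros β Hβ. apply Hvleast. intros x [d [[j [Hj ->]] Hx]].
    rewrite padd_comm in Hx. destruct (Hrow j Hj) as (w & Hw & [_ Hwleast]).
    rewrite Hx in Hw. injection Hw as <-. apply Hwleast.
    intros y [d [[k [Hk ->]] Hy]]. destruct (Hbelow j k Hj Hk) as (j3 & w & Hj3 & Hw & Hwr).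
    rewrite Hy in Hw. injection Hw as <-.
    apply le_trans with (r j3); [exact Hwr | apply Hβ; exists j3; auto].
Qed.

Lemma fsum_sup {I} (g : I -> J -> A) (s : I -> A) (l : list I) :
  (forall i, monotone_on P R (g i)) ->
  (forall i, In i l -> is_sup (le A) (image P (g i)) (s i)) ->
  (forall j, P j -> exists v, fsum A (map (fun i => g i j) l) = Some v) ->
  exists v, fsum A (map s l) = Some v /\
    is_sup (le A) (image P (fun j => fsum0 A (map (fun i => g i j) l))) v.
Proof.
  intros Hg. induction l as [|i l IH]; intros Hs Hdef.
  - exists pzero. split; [reflexivity | split].
    + intros x [j [_ ->]]. apply le_refl.
    + intros b _. apply le_0.
  - assert (Htail : forall j, P j -> exists v, fsum A (map (fun i => g i j) l) = Some v).
    { intros j Hj. destruct (Hdef j Hj) as [v Hv].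
      apply fsum_cons_inv in Hv as (w & Hw & _). eauto. }
    destruct IH as (vl & Hvl & Hsupl); [intros; apply Hs; right; auto | exact Htail |].
    assert (Htail_mono : monotone_on P R (fun j => fsum0 A (map (fun i => g i j) l))).
    { intros j j' Hj Hj' HR. apply fsum0_mono; [intros i' _; apply Hg; auto | exact (Htail j' Hj')]. }
    destruct (padd_sup (g i) _ (fun j => fsum0 A (map (fun i => g i j) (i :: l))) (s i) vl
                (Hg i) Htail_mono (Hs i (or_introl eq_refl)) Hsupl) as (v & Hv & Hsup).
    { intros j Hj. destruct (Hdef j Hj) as [v Hv]. rewrite (fsum0_eq A _ _ Hv).
      destruct (Htail j Hj) as [w Hw]. rewrite (fsum0_eq A _ _ Hw).
      simpl in Hv. rewrite Hw in Hv. exact Hv. }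
    exists v. split; [simpl; rewrite Hvl; exact Hv | exact Hsup].
Qed.

End Index.
End DirectedSups.

Definition countable {X : Type} (P : X -> Prop) : Prop :=
  exists en : nat -> option X, forall x, P x -> exists n, en n = Some x.

Lemma countable_sub {X} (P Q : X -> Prop) :
  (forall x, P x -> Q x) -> countable Q -> countable P.
Proof. intros HPQ [en Hen]. exists en. auto. Qed.

Lemma countable_nat (P : nat -> Prop) : countable P.
Proof. exists Some. eauto. Qed.

Lemma countable_cons {X} (a : X) (P : X -> Prop) :
  countable P -> countable (fun x => x = a \/ P x).
Proof.
  intros [en Hen]. exists (fun n => match n with O => Some a | S n => en n end).
  intros x [-> | Hx]; [exists O; reflexivity |].
  destruct (Hen x Hx) as [n Hn]. exists (S n). exact Hn.
Qed.

Lemma countable_bigcup {I X} (P : I -> Prop) (Q : I -> X -> Prop) :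
  countable P -> (forall i, P i -> countable (Q i)) ->
  countable (fun x => exists i, P i /\ Q i x).
Proof.
  intros [enP HenP] HQ.
  destruct (choice (fun i (en : nat -> option X) => P i -> forall x, Q i x -> exists n, en n = Some x))
    as [enQ HenQ].
  { intros i. destruct (classic (P i)) as [Hi | Hi].
    - destruct (HQ i Hi) as [en Hen]. exists en. auto.
    - exists (fun _ => None). contradiction. }
  exists (fun k => let (m, n) := Cantor.of_nat k in
                   match enP m with Some i => enQ i n | None => None end).
  intros x (i & Hi & Hx).
  destruct (HenP i Hi) as [m Hm]. destruct (HenQ i Hi x Hx) as [n Hn].
  exists (Cantor.to_nat (m, n)). rewrite Cantor.cancel_of_to, Hm. exact Hn.
Qed.

Section InfiniteSums.
Variable A : PSemiring.
Local Infix "⊑" := (le A) (at level 70).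

Definition finpart {I} (S : I -> Prop) (l : list I) : Prop :=
  NoDup l /\ forall i, In i l -> S i.

Lemma finpart_directed {I} (S : I -> Prop) : directed_index (finpart S) (@incl I).
Proof.
  split; [exists []; split; [constructor | intros i []] |].
  intros l1 l2 [Hl1 HS1] [Hl2 HS2].
  exists (nodup (fun x y => excluded_middle_informative (x = y)) (l1 ++ l2)).
  repeat split.
  - apply NoDup_nodup.
  - intros i Hi. apply nodup_In, in_app_or in Hi as [Hi | Hi]; auto.
  - intros i Hi. apply nodup_In, in_or_app; auto.
  - intros i Hi. apply nodup_In, in_or_app; auto.
Qed.

Lemma sum_on_iff {I} (S : I -> Prop) (g : I -> A) v : sum_on A S g v <->
  (forall l, finpart S l -> exists w, fsum A (map g l) = Some w) /\
  is_sup (le A) (image A (finpart S) (fun l => fsum0 A (map g l))) v.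
Proof.
  assert (Hset : (forall l, finpart S l -> exists w, fsum A (map g l) = Some w) -> forall x,
     (exists l, NoDup l /\ (forall i, In i l -> S i) /\ fsum A (map g l) = Some x) <->
     image A (finpart S) (fun l => fsum0 A (map g l)) x).
  { intros Hdef x. split.
    - intros (l & Hl & HS & Hx). exists l.
      split; [split; auto | symmetry; exact (fsum0_eq A _ _ Hx)].
    - intros [l [Hl ->]]. destruct (Hdef l Hl) as [w Hw]. destruct Hl as [Hl HS].
      exists l. rewrite (fsum0_eq A _ _ Hw). auto. }
  unfold sum_on. split; intros [Hdef Hsup].
  - assert (Hdef' : forall l, finpart S l -> exists w, fsum A (map g l) = Some w)
      by (intros l [Hl HS]; auto).
    split; [exact Hdef' | revert Hsup; apply is_sup_ext, Hset, Hdef'].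
  - split; [intros l Hl HS; apply Hdef; split; auto |].
    revert Hsup; apply is_sup_ext. intros x; symmetry; apply Hset, Hdef.
Qed.

Lemma partial_sums_mono {I} (S : I -> Prop) (g : I -> A) :
  (forall l, finpart S l -> exists w, fsum A (map g l) = Some w) ->
  monotone_on A (finpart S) (@incl I) (fun l => fsum0 A (map g l)).
Proof.
  intros Hdef l l' [Hl _] Hl' Hincl. destruct (Hdef l' Hl') as [w Hw].
  destruct (fsum_incl A g l l' w Hl (proj1 Hl') Hincl Hw) as (a & Ha & Haw).
  rewrite (fsum0_eq A _ _ Ha), (fsum0_eq A _ _ Hw). exact Haw.
Qed.

Lemma sum_exists {I} (S : I -> Prop) (g : I -> A) :
  (forall l, finpart S l -> exists w, fsum A (map g l) = Some w) -> exists v, sum_on A S g v.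
Proof.
  intros Hdef.
  destruct (sup_exists A _ _ (finpart_directed S) _ (partial_sums_mono S g Hdef)) as [v Hv].
  exists v. apply sum_on_iff. auto.
Qed.

Lemma sum_mono {I} (S : I -> Prop) (g1 g2 : I -> A) v1 v2 :
  sum_on A S g1 v1 -> sum_on A S g2 v2 -> (forall i, S i -> g1 i ⊑ g2 i) -> v1 ⊑ v2.
Proof.
  rewrite !sum_on_iff. intros [_ [_ Hleast1]] [Hdef2 [Hub2 _]] Hle.
  apply Hleast1. intros x [l [Hl ->]]. apply le_trans with (fsum0 A (map g2 l)).
  - apply fsum0_mono; [intros i Hi; apply Hle, (proj2 Hl), Hi | exact (Hdef2 l Hl)].
  - apply Hub2. exists l; auto.
Qed.

Lemma sum_nonzero {I} (S : I -> Prop) (g : I -> A) v :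
  sum_on A S g v -> v <> pzero -> exists i, S i /\ g i <> pzero.
Proof.
  rewrite sum_on_iff. intros [_ Hsup] Hv.
  destruct (sup_nonzero A _ _ _ Hsup Hv) as (l & [_ HS] & Hl).
  apply NNPP. intros Hno. apply Hl, fsum0_eq, fsum_zero.
  intros i Hi. apply NNPP. intros Hgi. apply Hno. eauto.
Qed.

Lemma isW_fsum {Sigma} (m : Sigma -> A) L :
  isW m -> NoDup L -> exists w, fsum A (map m L) = Some w.
Proof. intros [_ [v [Hdef _]]] HL. exact (Hdef L HL (fun _ _ => I)). Qed.

Lemma isW_intro {Sigma} (m : Sigma -> A) : countable (supp A m) ->
  (forall L, NoDup L -> exists w, fsum A (map m L) = Some w) -> isW m.
Proof.
  intros Hcount Hdef. split; [exact Hcount |].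
  apply sum_exists. intros L [HL _]. exact (Hdef L HL).
Qed.

Lemma isW_down {Sigma} (m m' : Sigma -> A) : isW m' -> (forall t, m t ⊑ m' t) -> isW m.
Proof.
  intros Hm' Hle. apply isW_intro.
  - apply (countable_sub _ (supp A m')); [| exact (proj1 Hm')].
    intros t Ht Hz. apply Ht, nle_antisym; [rewrite <- Hz; apply Hle | apply le_0].
  - intros L HL. destruct (isW_fsum m' L Hm' HL) as [w Hw].
    destruct (fsum_down A m m' L w (fun t _ => Hle t) Hw) as (a & Ha & _). eauto.
Qed.

Lemma Wle_of_le {Sigma} (m m' : Sigma -> A) : isW m' -> (forall t, m t ⊑ m' t) -> Wle m m'.
Proof.
  intros Hm' Hle. destruct (choice _ Hle) as [d Hd].
  exists d. split; [| exact Hd].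
  apply (isW_down d m' Hm'). intros t. exact (le_padd_r A _ _ _ (Hd t)).
Qed.

End InfiniteSums.

Section Iteration.
Context {A : PSemiring} {Sigma : Type} (c : Sigma -> Sigma -> A) (e e' : expr A Sigma).
Hypothesis e_e'_compatible : compatible e e'.
Hypothesis c_W : forall s, isW (c s).
Local Infix "⊑" := (le A) (at level 70).

Lemma eta_neq (s t : Sigma) : s <> t -> eta A s t = pzero.
Proof.
  intros Hst. unfold eta.
  destruct (ClassicalDescription.excluded_middle_informative (s = t)); [contradiction | reflexivity].
Qed.

Lemma eta_fsum (s : Sigma) L : NoDup L -> exists y, fsum A (map (eta A s) L) = Some y.
Proof.
  intros HL. destruct (classic (In s L)) as [Hs | Hs].
  - destruct (in_split _ _ Hs) as (L1 & L2 & ->).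
    pose proof (NoDup_remove_2 _ _ _ HL) as Hout.
    rewrite (fsum_perm A _ _ (Permutation_map _ (Permutation_sym (Permutation_middle L1 L2 s)))).
    simpl. rewrite (fsum_zero A (eta A s) (L1 ++ L2)).
    + simpl. rewrite padd_0. eauto.
    + intros t Ht. apply eta_neq. intros <-. contradiction.
  - exists pzero. apply fsum_zero. intros t Ht. apply eta_neq. intros ->. contradiction.
Qed.

Lemma Phi_body_defined s k y :
  exists r, padd (pmul (esem e s) k) (pmul (esem e' s) y) = Some r.
Proof.
  destruct (e_e'_compatible s) as [w Hw].
  destruct (padd_down A _ _ _ _ _ (pmul_mono_l A (esem e s) _ _ (le_top A k))
              (pmul_mono_l A (esem e' s) _ _ (le_top A y)) (pdistr_r A (top A) _ _ Hw))
    as (r & Hr & _).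
  eauto.
Qed.

Lemma bind_fsum (f : Sigma -> Sigma -> A) s t l : NoDup l ->
  exists w, fsum A (map (fun σ => pmul (c s σ) (f σ t)) l) = Some w.
Proof.
  intros Hl. destruct (isW_fsum A (c s) l (c_W s) Hl) as [m Hm].
  destruct (fsum_down A (fun σ => pmul (c s σ) (f σ t)) (fun σ => pmul (c s σ) (top A)) l
              (pmul m (top A)) (fun σ _ => pmul_mono_l A _ _ _ (le_top A _))
              (fsum_pmul_r A (c s) l (top A) m Hm)) as (w & Hw & _).
  eauto.
Qed.

Definition dagger (f : Sigma -> Sigma -> A) (s t : Sigma) : A :=
  epsilon (inhabits pzero) (sum_on A (supp A (c s)) (fun σ => pmul (c s σ) (f σ t))).

Lemma bind_is_dagger f s : bind_is A f (c s) (dagger f s).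
Proof.
  intros t. unfold dagger. apply epsilon_spec, sum_exists.
  intros l [Hl _]. exact (bind_fsum f s t l Hl).
Qed.

Definition Phi (f : Sigma -> Sigma -> A) (s t : Sigma) : A :=
  match padd (pmul (esem e s) (dagger f s t)) (pmul (esem e' s) (eta A s t)) with
  | Some r => r
  | None => pzero
  end.

Lemma Phi_spec f s t :
  padd (pmul (esem e s) (dagger f s t)) (pmul (esem e' s) (eta A s t)) = Some (Phi f s t).
Proof.
  unfold Phi. destruct (Phi_body_defined s (dagger f s t) (eta A s t)) as [r Hr].
  rewrite Hr. reflexivity.
Qed.

Lemma Phi_is_Phi f s r : (forall t, Phi f s t = r t) -> Phi_is c e e' f s r.
Proof.
  intros Hr. exists (dagger f s). split; [apply bind_is_dagger |].
  intros t. rewrite <- Hr. apply Phi_spec.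
Qed.

Lemma Phi_le_Phi_is f g s r : (forall σ t, f σ t ⊑ g σ t) -> Phi_is c e e' g s r ->
  forall t, Phi f s t ⊑ r t.
Proof.
  intros Hfg (k & Hk & Hr) t.
  refine (padd_mono A _ _ _ _ _ _ _ (le_refl A _) (Phi_spec f s t) (Hr t)).
  apply pmul_mono_l. apply (sum_mono A _ _ _ _ _ (bind_is_dagger f s t) (Hk t)).
  intros σ _. apply pmul_mono_l, Hfg.
Qed.

Lemma Phi_mono f g : (forall σ t, f σ t ⊑ g σ t) -> forall s t, Phi f s t ⊑ Phi g s t.
Proof. intros Hfg s. exact (Phi_le_Phi_is f g s _ Hfg (Phi_is_Phi g s _ (fun _ => eq_refl))). Qed.

Fixpoint kleene (n : nat) : Sigma -> Sigma -> A :=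
  match n with
  | O => fun _ _ => pzero
  | S n => Phi (kleene n)
  end.

Lemma kleene_step n : forall s t, kleene n s t ⊑ kleene (S n) s t.
Proof. induction n as [|n IH]; intros s t; [apply le_0 | apply Phi_mono, IH]. Qed.

Lemma kleene_mono n m s t : n <= m -> kleene n s t ⊑ kleene m s t.
Proof. induction 1; [apply le_refl | eapply le_trans; [eassumption | apply kleene_step]]. Qed.

Definition lfp (s t : Sigma) : A :=
  epsilon (inhabits pzero) (is_sup (le A) (image A (fun _ => True) (fun n => kleene n s t))).

Lemma lfp_sup s t : is_sup (le A) (image A (fun _ => True) (fun n => kleene n s t)) (lfp s t).
Proof.
  unfold lfp. apply epsilon_spec, (sup_exists A _ _ nat_directed).
  intros n m _ _ Hnm. apply kleene_mono, Hnm.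
Qed.

Lemma dagger_sup (fn : nat -> Sigma -> Sigma -> A) f s t :
  (forall σ, monotone_on A (fun _ => True) Peano.le (fun n => fn n σ t)) ->
  (forall σ, is_sup (le A) (image A (fun _ => True) (fun n => fn n σ t)) (f σ t)) ->
  is_sup (le A) (image A (fun _ => True) (fun n => dagger (fn n) s t)) (dagger f s t).
Proof.
  intros Hmono Hsup.
  apply (sup_exchange A (finpart (supp A (c s))) (fun _ : nat => True)
           (fun l n => fsum0 A (map (fun σ => pmul (c s σ) (fn n σ t)) l))
           (fun l => fsum0 A (map (fun σ => pmul (c s σ) (f σ t)) l))).
  - intros l [Hl _].
    destruct (fsum_sup A _ _ nat_directed (fun σ n => pmul (c s σ) (fn n σ t))
                (fun σ => pmul (c s σ) (f σ t)) l) as (v & Hv & Hvsup).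
    + intros σ n m Hn Hm Hnm. apply pmul_mono_l, Hmono; assumption.
    + intros σ _. apply (pmul_sup_l A _ _ nat_directed); [apply Hmono | apply Hsup].
    + intros n _. apply bind_fsum, Hl.
    + rewrite (fsum0_eq A _ _ Hv). exact Hvsup.
  - intros n _. exact (proj2 (proj1 (sum_on_iff A _ _ _) (bind_is_dagger (fn n) s t))).
  - exact (proj2 (proj1 (sum_on_iff A _ _ _) (bind_is_dagger f s t))).
Qed.

Lemma Phi_sup (fn : nat -> Sigma -> Sigma -> A) f s t :
  (forall σ, monotone_on A (fun _ => True) Peano.le (fun n => fn n σ t)) ->
  (forall σ, is_sup (le A) (image A (fun _ => True) (fun n => fn n σ t)) (f σ t)) ->
  is_sup (le A) (image A (fun _ => True) (fun n => Phi (fn n) s t)) (Phi f s t).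
Proof.
  intros Hmono Hsup.
  assert (Hdagger_mono : monotone_on A (fun _ => True) Peano.le (fun n => dagger (fn n) s t)).
  { intros n m _ _ Hnm.
    apply (sum_mono A _ _ _ _ _ (bind_is_dagger (fn n) s t) (bind_is_dagger (fn m) s t)).
    intros σ _. apply pmul_mono_l, Hmono; auto. }
  destruct (padd_sup A _ _ nat_directed _ (fun _ => pmul (esem e' s) (eta A s t))
              (fun n => Phi (fn n) s t) _ _
              (fun n m Hn Hm Hnm => pmul_mono_l A _ _ _ (Hdagger_mono n m Hn Hm Hnm))
              (fun _ _ _ _ _ => le_refl A _)
              (pmul_sup_l A _ _ nat_directed _ _ _ Hdagger_mono (dagger_sup fn f s t Hmono Hsup))
              (sup_const A _ _ nat_directed _) (fun n _ => Phi_spec (fn n) s t))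
    as (v & Hv & Hvsup).
  rewrite Phi_spec in Hv. injection Hv as <-. exact Hvsup.
Qed.

Lemma Phi_lfp s t : Phi lfp s t = lfp s t.
Proof.
  apply (sup_unique A (image A (fun _ => True) (fun n => kleene n s t))); [| apply lfp_sup].
  apply sup_shift; [apply le_0 |].
  apply Phi_sup; [| intros σ; apply lfp_sup].
  intros σ n m _ _ Hnm. apply kleene_mono, Hnm.
Qed.

Lemma lfp_le_fixpoint g : (forall s, Phi_is c e e' g s (g s)) ->
  forall s t, lfp s t ⊑ g s t.
Proof.
  intros Hg s t. apply (proj2 (lfp_sup s t)). intros x [n [_ ->]]. revert s t.
  induction n as [|n IH]; intros s t; [apply le_0 | exact (Phi_le_Phi_is _ _ s _ IH (Hg s) t)].
Qed.

Lemma supp_Phi f s t :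
  supp A (Phi f s) t -> t = s \/ exists σ, supp A (c s) σ /\ supp A (f σ) t.
Proof.
  intros Ht. destruct (classic (s = t)) as [-> | Hst]; [left; reflexivity | right].
  assert (Hd : dagger f s t <> pzero).
  { intros Hd. apply Ht. pose proof (Phi_spec f s t) as H.
    rewrite Hd, (eta_neq s t Hst), !pmul_0r, padd_0 in H. injection H as <-. reflexivity. }
  destruct (sum_nonzero A _ _ _ (bind_is_dagger f s t) Hd) as (σ & Hσ & Hprod).
  exists σ. split; [exact Hσ |]. intros Hz. apply Hprod. rewrite Hz. apply pmul_0r.
Qed.

(* Finite double sums [sum_(t in L) sum_(σ in l) c s σ * f σ t] are defined: after
   exchanging the sums they are bounded by [(sum_(σ in l) c s σ) * top]. *)
Lemma dagger_fsum f s L : (forall σ, isW (f σ)) -> NoDup L ->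
  exists w, fsum A (map (dagger f s) L) = Some w.
Proof.
  intros HfW HL.
  pose proof (fun σ => isW_fsum A (f σ) L (HfW σ) HL) as Hmass.
  destruct (fsum_sup A _ _ (finpart_directed (supp A (c s)))
              (fun t l => fsum0 A (map (fun σ => pmul (c s σ) (f σ t)) l)) (dagger f s) L)
    as (v & Hv & _); [| | | exists v; exact Hv].
  - intros t. apply partial_sums_mono. intros l [Hl _]. apply bind_fsum, Hl.
  - intros t _. exact (proj2 (proj1 (sum_on_iff A _ _ _) (bind_is_dagger f s t))).
  - intros l [Hl _]. destruct (isW_fsum A (c s) l (c_W s) Hl) as [m Hm].
    destruct (fsum_down A (fun σ => fsum0 A (map (fun t => pmul (c s σ) (f σ t)) L))
                (fun σ => pmul (c s σ) (top A)) l (pmul m (top A))) as (w & Hw & _).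
    + intros σ _. destruct (Hmass σ) as [mσ Hmσ].
      rewrite (fsum0_eq A _ _ (fsum_pmul_l A (f σ) L (c s σ) mσ Hmσ)).
      apply pmul_mono_l, le_top.
    + apply fsum_pmul_r, Hm.
    + exists w. apply (fsum_exchange A (fun σ t => pmul (c s σ) (f σ t))); [| | exact Hw].
      * intros t _. apply bind_fsum, Hl.
      * intros σ _. destruct (Hmass σ) as [mσ Hmσ].
        exists (pmul (c s σ) mσ). apply fsum_pmul_l, Hmσ.
Qed.

Lemma Phi_W f : (forall σ, isW (f σ)) -> forall s, isW (Phi f s).
Proof.
  intros HfW s. apply isW_intro.
  - apply (countable_sub _ _ (supp_Phi f s)), countable_cons.
    apply countable_bigcup; [exact (proj1 (c_W s)) | intros σ _; exact (proj1 (HfW σ))].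
  - intros L HL.
    destruct (dagger_fsum f s L HfW HL) as [K HK]. destruct (eta_fsum s L HL) as [Y HY].
    destruct (Phi_body_defined s K Y) as [r Hr].
    exists r. exact (fsum_padd A _ _ _ L _ _ _ (fun t _ => Phi_spec f s t)
                      (fsum_pmul_l A _ L _ K HK) (fsum_pmul_l A _ L _ Y HY) Hr).
Qed.

Lemma kleene_W n : forall s, isW (kleene n s).
Proof.
  induction n as [|n IH]; intros s; [| exact (Phi_W _ IH s)].
  apply isW_intro.
  - exists (fun _ => None). intros t Ht. contradiction Ht. reflexivity.
  - intros L _. exists pzero. apply fsum_zero. reflexivity.
Qed.

Lemma lfp_W s : isW (lfp s).
Proof.
  apply isW_intro.
  - apply (countable_sub _ (fun t => exists n, True /\ supp A (kleene n s) t)).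
    + intros t Ht. exact (sup_nonzero A _ _ _ (lfp_sup s t) Ht).
    + apply countable_bigcup; [apply countable_nat | intros n _; exact (proj1 (kleene_W n s))].
  - intros L HL.
    destruct (fsum_sup A _ _ nat_directed (fun t n => kleene n s t) (lfp s) L)
      as (v & Hv & _); [| | | exists v; exact Hv].
    + intros t n m _ _ Hnm. apply kleene_mono, Hnm.
    + intros t _. apply lfp_sup.
    + intros n _. exact (isW_fsum A _ L (kleene_W n s) HL).
Qed.

End Iteration.

Theorem lemmaA9 (A : PSemiring) (Sigma : Type)
    (c : Sigma -> Sigma -> A) (e e' : expr A Sigma) :
  compatible e e' ->
  (forall s, isW (c s)) ->
  exists f : Sigma -> Sigma -> A, is_lfp_iter c e e' f.
Proof.
  intros Hcomp HW. exists (lfp c e e'). split; [| split].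
  - exact (lfp_W c e e' Hcomp HW).
  - intros s. apply (Phi_is_Phi c e e' Hcomp HW). exact (Phi_lfp c e e' Hcomp HW s).
  - intros g HgW Hg s. apply (Wle_of_le A _ _ (HgW s)).
    exact (lfp_le_fixpoint c e e' Hcomp HW g Hg s).
Qed.
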